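(* Let $\mathcal{G}=(\mathcal{V},\mathcal{E})$ be an undirected graph with $|\mathcal{N}_i|\ge (d+1)F+1$ for every $i\in\mathcal{V}$, and suppose the misbehaving agents follow either the $F$-local or the $F$-total attack model. If the benign agents run the resilient multi-dimensional consensus algorithm described in the context (with arbitrary admissible choices of the middle points), then for every $k\ge 0$, $\varOmega(k+1)\subset\varOmega(k)$.
   Context: $\mathcal{G}=(\mathcal{V},\mathcal{E})$ is undirected, $\mathcal{N}_i=\{j\in\mathcal{V}: e_{ij}\in\mathcal{E}\}$. $\mathcal{V}=\mathcal{B}\cup\mathcal{F}$ disjointly; $\mathcal{F}$ are misbehaving agents, which may send arbitrary (possibly different to different neighbors, possibly colluding) values at each time; $\mathcal{B}$ are benign agents following the algorithm. $F$-total attack model: $|\mathcal{F}|\le F$. $F$-local attack model: $|\mathcal{F}\cap\mathcal{N}_i|\le F$ for all $i\in\mathcal{V}$. For a finite multiset $\mathcal{A}\subset\mathbb{R}^d$ of cardinality $m$ (counted with multiplicity) and integer $0\le n\le m$, let $\mathcal{S}(\mathcal{A},n)$ be the collection of all sub-multisets of $\mathcal{A}$ of cardinality $m-n$, and $\varPsi(\mathcal{A},n)=\bigcap_{S\in\mathcal{S}(\mathcal{A},n)}\mathrm{Conv}(S)$. Algorithm: each benign agent $i$ has state $x^i(k)\in\mathbb{R}^d$. At each time $k$: (1) $i$ collects in the multiset $\mathcal{X}^i(k)$ the values received from all $j\in\mathcal{N}_i$; (2) with $p=(k \bmod d)+1$, it sorts the points of $\mathcal{X}^i(k)$ in ascending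 order of their $p$-th entries; (3) $\mathcal{Y}^i(k)$ is the multiset of the first $(d+1)F+1$ sorted points, and $y^i(k)$ is any point of $\varPsi(\mathcal{Y}^i(k),F)$; (4) $\mathcal{Z}^i(k)$ is the multiset of the last $(d+1)F+1$ sorted points, and $z^i(k)$ is any point of $\varPsi(\mathcal{Z}^i(k),F)$; (5) $x^i(k+1)=\frac{1}{3}\big(x^i(k)+y^i(k)+z^i(k)\big)$, which is sent to all neighbors. $\varOmega(k)$ denotes the convex hull of $\{x^i(k): i\in\mathcal{B}\}$. *)

From HB Require Import structures.
From mathcomp Require Import all_boot all_order all_algebra.
Set Implicit Arguments. Unset Strict Implicit. Unset Printing Implicit Defensive.
Import Order.TTheory GRing.Theory Num.Theory.
Local Open Scope ring_scope.

(* Conv: x lies in the convex hull of the finite (multi)family of points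
   {f i : i \in P} (points are indexed, so repetitions = multiplicities). *)
Definition inConv (R : realFieldType) (d : nat) (I : finType) (P : {set I})
  (f : I -> 'rV[R]_d) (x : 'rV[R]_d) : Prop :=
  exists lam : I -> R,
    [/\ forall i, 0 <= lam i,
        forall i, i \notin P -> lam i = 0,
        \sum_(i in P) lam i = 1
      & x = \sum_(i in P) lam i *: f i].

Definition inPsi (R : realFieldType) (d : nat) (I : finType) (P : {set I})
  (f : I -> 'rV[R]_d) (n : nat) (x : 'rV[R]_d) : Prop :=
  forall Q : {set I}, Q \subset P -> (#|Q| + n)%N = #|P| -> inConv Q f x.

(* the p-th entry (0-based) of a row vector; 0 if p is out of range *)
Definition entry (R : realFieldType) (d : nat) (v : 'rV[R]_d) (p : nat) : R :=
  if @insub nat (fun q => q < d)%N _ p is Some j then v ord0 j else 0.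

Definition nbhd (V : finType) (e : rel V) (i : V) : {set V} := [set j | e i j].

From HB Require Import structures.
From mathcomp Require Import all_boot all_order all_algebra.
From mathcomp Require Import zify.

(* Each benign update x^i(k+1) is the average of x^i(k), y and z, so it
   suffices that y and z lie in Omega(k).  A point of Psi(Y, F) lies in the
   convex hull of every sub-multiset of Y of size |Y| - F.  Under either attack
   model at most F of the values received by i come from misbehaving
   neighbours, so Y has a sub-multiset of that size made only of benign
   states x^j(k), whose hull is contained in Omega(k).  Neither the sorting
   step nor the precise size (d+1)F+1 of Y matters beyond |Y| >= F. *)

Set Implicit Arguments.
Unset Strict Implicit.
Unset Printing Implicit Defensive.
Import Order.TTheory GRing.Theory Num.Theory.
Local Open Scope ring_scope.

Section ConvexHull.

Variables (R : realFieldType) (d : nat).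
Implicit Types (I J : finType).

Lemma inConv_mem I (P : {set I}) (f : I -> 'rV[R]_d) j :
  j \in P -> inConv P f (f j).
Proof.
move=> jP; exists (fun i => (i == j)%:R); split.
- by move=> i; rewrite ler0n.
- by move=> i iNP; case: eqP iNP => // ->; rewrite jP.
- by rewrite (bigD1 j) //= eqxx big1 ?addr0 // => i /andP[_ /negbTE ->].
- rewrite (bigD1 j) //= eqxx scale1r big1 ?addr0 // => i /andP[_ /negbTE ->].
  by rewrite scale0r.
Qed.

Lemma inConv_trans I J (P : {set I}) (Q : {set J}) (f : I -> 'rV[R]_d)
    (g : J -> 'rV[R]_d) w :
  inConv P f w -> (forall i, i \in P -> inConv Q g (f i)) -> inConv Q g w.
Proof.
move=> [lam [lam_ge0 lam_out lam_sum ->]] fPQ.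
have /fin_all_exists[mu mu_spec] : forall i, exists mu : J -> R, i \in P ->
    [/\ forall j, 0 <= mu j, forall j, j \notin Q -> mu j = 0,
        \sum_(j in Q) mu j = 1 & f i = \sum_(j in Q) mu j *: g j].
  move=> i.
  by case: (boolP (i \in P)) => [/fPQ[mu] | _]; [exists mu | exists (fun=> 0)].
exists (fun j => \sum_(i in P) lam i * mu i j); split.
- move=> j; apply: sumr_ge0 => i iP.
  by have [mu_ge0 _ _ _] := mu_spec i iP; rewrite mulr_ge0.
- move=> j jNQ; apply: big1 => i iP.
  by have [_ -> // _ _] := mu_spec i iP; rewrite mulr0.
- rewrite exchange_big -lam_sum; apply: eq_bigr => i iP.
  by have [_ _ mu_sum _] := mu_spec i iP; rewrite -mulr_sumr mu_sum mulr1.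
- apply/esym; under eq_bigr do rewrite scaler_suml.
  rewrite exchange_big; apply: eq_bigr => i iP.
  have [_ _ _ ->] := mu_spec i iP.
  by rewrite scaler_sumr; apply: eq_bigr => j _; rewrite scalerA.
Qed.

Lemma inConv_mean I (P : {set I}) (f : I -> 'rV[R]_d) n (u : 'I_n.+1 -> 'rV_d) :
  (forall j, inConv P f (u j)) -> inConv P f (n.+1%:R^-1 *: \sum_j u j).
Proof.
move=> uP; apply: inConv_trans (fun j (_ : j \in setT) => uP j).
exists (fun=> n.+1%:R^-1); split=> //.
- by move=> j; rewrite invr_ge0 ler0n.
- by move=> j; rewrite in_setT.
- by rewrite sumr_const cardsT card_ord -[_ *+ _]mulr_natr mulVf ?pnatr_eq0.
- by rewrite scaler_sumr; apply: eq_bigl => j; rewrite in_setT.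
Qed.

Lemma inConv_subset I (P Q : {set I}) (f : I -> 'rV[R]_d) w :
  P \subset Q -> inConv P f w -> inConv Q f w.
Proof. by move=> PQ /inConv_trans; apply => i /(subsetP PQ); apply: inConv_mem. Qed.

Lemma inPsi_inConv I (P G : {set I}) (f : I -> 'rV[R]_d) n w :
  (n <= #|P|)%N -> (#|P :\: G| <= n)%N -> inPsi P f n w -> inConv (P :&: G) f w.
Proof.
move=> nP PGn Pw.
have cardPG : (#|P| - n <= #|P :&: G|)%N.
  by have := cardsID G P; rewrite setIC; lia.
have [Q] : exists Q, Q \in [set A : {set I} | A \subset P :&: G & #|A| == (#|P| - n)%N].
  by apply/card_gt0P; rewrite cards_draws bin_gt0.
rewrite inE => /andP[QPG /eqP cardQ].
apply: inConv_subset QPG (Pw Q (subset_trans QPG (subsetIl _ _)) _).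
by rewrite cardQ subnK.
Qed.

Lemma inPsi_inConv_honest I J (P : {set I}) (pts : I -> 'rV[R]_d)
    (s : I -> J) (B : {set J}) (xB : J -> 'rV[R]_d) n w :
  (n <= #|P|)%N -> (#|s @^-1: ~: B| <= n)%N ->
  (forall t, s t \in B -> pts t = xB (s t)) ->
  inPsi P pts n w -> inConv B xB w.
Proof.
move=> nP dishonest_n honest Pw.
have dishonest_P : (#|P :\: s @^-1: B| <= n)%N.
  apply: leq_trans dishonest_n; apply/subset_leq_card/subsetP => t.
  by rewrite !inE => /andP[].
apply: inConv_trans (inPsi_inConv nP dishonest_P Pw) _ => t.
by rewrite !inE => /andP[_ sB]; rewrite honest //; apply: inConv_mem.
Qed.

End ConvexHull.

Lemma leq_card_preimset (I T : finType) (s : I -> T) (A C : {set T}) :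
  injective s -> (forall t, s t \in A) -> (#|s @^-1: C| <= #|C :&: A|)%N.
Proof.
move=> s_inj sA; rewrite -(card_imset _ s_inj) subset_leq_card //.
by apply/subsetP => _ /imsetP[t + ->]; rewrite !inE => ->; rewrite sA.
Qed.

Lemma widen_ord_inj m n (mn : (m <= n)%N) : injective (widen_ord mn).
Proof. by move=> i j /(congr1 val) /= /val_inj. Qed.

Lemma card_ord_prefix n m : (m <= n)%N -> #|[set t : 'I_n | (t < m)%N]| = m.
Proof.
move=> mn; rewrite -[RHS]card_ord -(card_imset _ (@widen_ord_inj _ _ mn)).
congr #|pred_of_set _|; apply/setP => t; rewrite inE.
apply/idP/imsetP => [tm | [j _ ->] /=]; last exact: ltn_ord.
by exists (Ordinal tm) => //; apply: val_inj.
Qed.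

Lemma card_ord_suffix n m : (m <= n)%N -> #|[set t : 'I_n | (n - m <= t)%N]| = m.
Proof.
move=> mn; rewrite -[RHS](card_ord_prefix mn) -(card_preimset _ rev_ord_inj).
congr #|pred_of_set _|; apply/setP => t; rewrite !inE /=.
by have := ltn_ord t; lia.
Qed.

Theorem proposition1
  (R : realFieldType) (d F : nat) (hd : (0 < d)%N)
  (V : finType) (e : rel V)
  (e_sym : symmetric e) (e_irr : irreflexive e)
  (hdeg : forall i : V, ((d.+1) * F + 1 <= #|nbhd e i|)%N)
  (B : {set V})   (* benign agents; the misbehaving ones are ~: B *)
  (hatt : (forall i : V, #|~: B :&: nbhd e i| <= F)%N \/ (#|~: B| <= F)%N)
  (x : V -> nat -> 'rV[R]_d)             (* states x^i(k) *)
  (msg : nat -> V -> V -> 'rV[R]_d)      (* msg k j i : value sent by j to i at time k *)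
  (hmsg : forall k j i, j \in B -> msg k j i = x j k)
  (hstep : forall (i : V) (k : nat), i \in B ->
     exists (sigma : 'I_#|nbhd e i| -> V) (y z : 'rV[R]_d),
       let pts := fun t => msg k (sigma t) i in
       let p := (k %% d)%N in
       [/\ injective sigma /\ (forall t, sigma t \in nbhd e i),
           forall t1 t2 : 'I_#|nbhd e i|, (t1 <= t2)%N ->
              entry (pts t1) p <= entry (pts t2) p,
           inPsi [set t : 'I_#|nbhd e i| | (t < (d.+1) * F + 1)%N] pts F y,
           inPsi [set t : 'I_#|nbhd e i| |
                    (#|nbhd e i| - ((d.+1) * F + 1) <= t)%N] pts F z
         & x i k.+1 = 3^-1 *: (x i k + y + z)]) :
  forall (k : nat) (w : 'rV[R]_d),
    inConv B (fun i => x i k.+1) w -> inConv B (fun i => x i k) w.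
Proof.
have F_local i : (#|~: B :&: nbhd e i| <= F)%N.
  by case: hatt => // totalF; apply: leq_trans totalF; rewrite subset_leq_card ?subsetIl.
move=> k w /inConv_trans; apply=> i iB.
have [s [y [z /= [[s_inj s_nbhd] _ hy hz ->]]]] := hstep i k iB.
have dishonest := leq_trans (leq_card_preimset (~: B) s_inj s_nbhd) (F_local i).
have F_le_m : (F <= (d.+1) * F + 1)%N by lia.
have yB : inConv B (x^~ k) y.
  by apply: (inPsi_inConv_honest _ dishonest _ hy) => [|t /hmsg]; rewrite ?card_ord_prefix.
have zB : inConv B (x^~ k) z.
  by apply: (inPsi_inConv_honest _ dishonest _ hz) => [|t /hmsg]; rewrite ?card_ord_suffix.
have -> : x i k + y + z = \sum_(j < 3) [:: x i k; y; z]`_j.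
  by rewrite !big_ord_recl big_ord0 /= addr0 addrA.
apply: inConv_mean => -[[|[|[|//]]] /= _].
- exact: inConv_mem.
- exact: yB.
- exact: zB.
Qed.
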